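(* In the setting of the context, if $D<a-3$ then the quadric fibration $\pi:\widetilde{X}_{(a,1,1);D}\to\mathbb{P}^1$ has generic corank $\geq1$.
   Context: Let $a,D\geq1$, masses $m_1^2,\dots,m_{a+2}^2>0$ and vectors $p,k_1,\dots,k_a\in\mathbb{C}^D$; set $r_i^2=(p+\sum_{j=1}^{i-1}k_j)^2$ and $q_{ij}^2=(\sum_{r=i}^{j-1}k_r)^2$ for $i<j$. On $\mathbb{P}^{a+1}$ with coordinates $y_1,\dots,y_a,x,z$, the graph hypersurface of type $(a,1,1)$ is $X_{(a,1,1);D}=V(\mathbf{F})$ with $\mathbf{U}=(z+x)\sum_iy_i+zx$, $\mathbf{V}=(z+x)\sum_{i<j}q_{ij}^2y_iy_j+zx\sum_jr_j^2y_j$, $\mathbf{F}=\mathbf{U}(\sum_im_i^2y_i+m_{a+1}^2x+m_{a+2}^2z)-\mathbf{V}$. $\widetilde{X}_{(a,1,1);D}$ is its strict transform in the blow-up of $\mathbb{P}^{a+1}$ along $V(x,z)$, i.e. the hypersurface in homogeneous coordinates $(y_1,\dots,y_a,x,z,w)$ (blow-down map $[y:xw:zw]$) given by $\widetilde{\mathbf{U}}(\sum_im_i^2y_i+m_{a+1}^2xw+m_{a+2}^2zw)-\widetilde{\mathbf{V}}$ with $\widetilde{\mathbf{U}}=(z+x)\sum_iy_i+zxw$, $\widetilde{\mathbf{V}}=(z+x)\sum_{i<j}q_{ij}^2y_iy_j+zxw\sum_jr_j^2y_j$. The map $\pi$ is $[x:z]$; each fibre is a quadric in $\mathbb{P}^a$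 (coordinates $y_1,\dots,y_a,w$), and the generic corank of $\pi$ is the corank of the fibre quadratic form at a general point of $\mathbb{P}^1$. *)

From mathcomp Require Import all_boot all_order all_algebra.
From mathcomp Require Import complex.
From mathcomp Require Import Rstruct.
Set Implicit Arguments. Unset Strict Implicit. Unset Printing Implicit Defensive.
Import Order.TTheory GRing.Theory Num.Theory.
Local Open Scope ring_scope.

Notation CC := (complex Rdefinitions.R).

Section Feynman.
Variables (a D : nat).

Definition vsq (v : 'rV[CC]_D) : CC := \sum_(l < D) v 0 l ^+ 2.

(* Indices are 0-based: k j for j : 'I_a is k_{j+1}. *)
Definition rsq (p : 'rV[CC]_D) (k : 'I_a -> 'rV[CC]_D) (i : 'I_a) : CC :=
  vsq (p + \sum_(j < a | (j < i)%N) k j).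

Definition qsq (k : 'I_a -> 'rV[CC]_D) (i j : 'I_a) : CC :=
  vsq (\sum_(r < a | (i <= r)%N && (r < j)%N) k r).

(* Fibre of pi over [x:z] : quadric in P^a with coordinates (y_1..y_a, w);
   a vector v : 'rV_(a.+1) has y_i = v 0 (widen_ord _ i) and w = v 0 ord_max.
   msq i = m_{i+1}^2 (i < a), msqx = m_{a+1}^2, msqz = m_{a+2}^2. *)
Definition fibreQ (msq : 'I_a -> CC) (msqx msqz : CC)
  (p : 'rV[CC]_D) (k : 'I_a -> 'rV[CC]_D) (x z : CC) (v : 'rV[CC]_a.+1) : CC :=
  let y := fun i : 'I_a => v 0 (widen_ord (leqnSn a) i) in
  let w := v 0 ord_max in
  let Ut := (z + x) * (\sum_(i < a) y i) + z * x * w in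
  let Lt := \sum_(i < a) msq i * y i + (msqx * x + msqz * z) * w in
  let Vt := (z + x) * (\sum_(i < a) \sum_(j < a | (i < j)%N) qsq k i j * y i * y j)
            + z * x * w * (\sum_(j < a) rsq p k j * y j) in
  Ut * Lt - Vt.

Definition fibreGram msq msqx msqz p k (x z : CC) : 'M[CC]_a.+1 :=
  \matrix_(i, j)
    ((fibreQ msq msqx msqz p k x z (delta_mx 0 i + delta_mx 0 j)
      - fibreQ msq msqx msqz p k x z (delta_mx 0 i)
      - fibreQ msq msqx msqz p k x z (delta_mx 0 j)) / 2).

Definition fibre_corank msq msqx msqz p k (x z : CC) : nat :=
  (a.+1 - \rank (fibreGram msq msqx msqz p k x z))%N.

End Feynman.

From mathcomp Require Import all_boot all_order all_algebra.
From mathcomp Require Import complex Rstruct.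
From mathcomp Require Import ring zify.
Import Order.TTheory GRing.Theory Num.Theory.
Set Implicit Arguments. Unset Strict Implicit. Unset Printing Implicit Defensive.
Local Open Scope ring_scope.

(* Over [t:1] the fibre quadric splits as
     (1 + t) (Σ_i y_i) (L - A) + t w (L - B) + (1 + t) Σ_(l < D) C_l^2
   with L, A, B, C_l linear forms. The one non-obvious input is the identity
     Σ_(i<j) (P_j - P_i)^2 y_i y_j = (Σ_i P_i^2 y_i)(Σ_i y_i) - Σ_l (Σ_i P_il y_i)^2
   for the partial sums P_i = k_1 + ... + k_(i-1), which turns the q_ij^2 part of V
   into a product minus D squares. A product of two linear forms has Gram rank at
   most 2 and a square at most 1, so every fibre over the chart z <> 0 has rank at
   most D + 4 <= a: its corank is >= 1 and the exceptional set can be taken empty. *)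

Lemma mxrank_sum_leq (F : fieldType) (I : Type) (r : seq I) (P : pred I) m n
    (A : I -> 'M[F]_(m, n)) :
  (\rank (\sum_(i <- r | P i) A i)%R <= \sum_(i <- r | P i) \rank (A i))%N.
Proof.
elim: r => [|i r IH]; first by rewrite !big_nil mxrank0.
rewrite !big_cons; case: (P i) => //.
exact: leq_trans (mxrank_add _ _) (leq_add (leqnn _) IH).
Qed.

Section PolarMatrix.
Variables (F : numFieldType) (n : nat).
Implicit Types (Q : 'rV[F]_n -> F) (l : 'rV[F]_n -> F).

Definition polar_mx Q : 'M[F]_n :=
  \matrix_(i, j) ((Q (delta_mx 0 i + delta_mx 0 j) - Q (delta_mx 0 i)
                   - Q (delta_mx 0 j)) / 2).

Lemma eq_polar_mx Q1 Q2 : Q1 =1 Q2 -> polar_mx Q1 = polar_mx Q2.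
Proof. by move=> eqQ; apply/matrixP => i j; rewrite !mxE !eqQ. Qed.

Lemma polar_mxD Q1 Q2 : polar_mx (fun v => Q1 v + Q2 v) = polar_mx Q1 + polar_mx Q2.
Proof. by apply/matrixP => i j; rewrite !mxE; ring. Qed.

Lemma polar_mx_sum m (Q : 'I_m -> 'rV[F]_n -> F) :
  polar_mx (fun v => \sum_(s < m) Q s v) = \sum_(s < m) polar_mx (Q s).
Proof.
apply/matrixP => i j; rewrite !mxE summxE -!sumrB mulr_suml.
by apply: eq_bigr => s _; rewrite !mxE.
Qed.

Let coef_col l : 'cV[F]_n := \col_i l (delta_mx 0 i).
Let coef_row l : 'rV[F]_n := \row_i l (delta_mx 0 i).

Lemma mxrank_outer (u : 'cV[F]_n) (v : 'rV[F]_n) : (\rank (u *m v) <= 1)%N.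
Proof. exact: leq_trans (mxrankM_maxl _ _) (rank_leq_col _). Qed.

Lemma polar_mx_mul l1 l2 :
    {morph l1 : u w / u + w} -> {morph l2 : u w / u + w} ->
  polar_mx (fun v => l1 v * l2 v)
  = 2^-1 *: (coef_col l1 *m coef_row l2 + coef_col l2 *m coef_row l1).
Proof.
by move=> l1D l2D; apply/matrixP => i j; rewrite !mxE !big_ord1 !mxE l1D l2D; ring.
Qed.

Lemma mxrank_polar_mx_mul l1 l2 :
    {morph l1 : u w / u + w} -> {morph l2 : u w / u + w} ->
  (\rank (polar_mx (fun v => (l1 v * l2 v)%R)) <= 2)%N.
Proof.
move=> l1D l2D; rewrite polar_mx_mul //; apply: leq_trans (mxrank_scale _ _) _.
exact: leq_trans (mxrank_add _ _) (leq_add (mxrank_outer _ _) (mxrank_outer _ _)).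
Qed.

Lemma mxrank_polar_mx_scale_sqr (c : F) l : {morph l : u w / u + w} ->
  (\rank (polar_mx (fun v => (c * l v ^+ 2)%R)) <= 1)%N.
Proof.
move=> lD; have two_neq0 : (2 : F) != 0 by rewrite pnatr_eq0.
have -> : polar_mx (fun v => c * l v ^+ 2) = c *: (coef_col l *m coef_row l).
  by apply/matrixP => i j; rewrite !mxE !big_ord1 !mxE lD; field.
exact: leq_trans (mxrank_scale _ _) (mxrank_outer _ _).
Qed.

End PolarMatrix.

Section SymmetricSums.
Variables (R : comRingType) (n : nat).

Lemma double_sum_sym_diag0 (T : 'I_n -> 'I_n -> R) :
    (forall i j, T i j = T j i) -> (forall i, T i i = 0) ->
  \sum_i \sum_j T i j = 2 * \sum_(i < n) \sum_(j < n | (i < j)%N) T i j.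
Proof.
move=> T_sym T_diag0.
have split_row i : \sum_j T i j
    = \sum_(j < n | (i < j)%N) T i j + \sum_(j < n | (j < i)%N) T i j.
  rewrite (bigID (fun j : 'I_n => (i < j)%N)) /=; congr (_ + _).
  rewrite (bigD1 i) ?ltnn //= T_diag0 add0r; apply: eq_bigl => j.
  by rewrite -leqNgt ltn_neqAle andbC -val_eqE eq_sym.
have lower_upper : \sum_(i < n) \sum_(j < n | (j < i)%N) T i j
    = \sum_(i < n) \sum_(j < n | (i < j)%N) T i j.
  rewrite (exchange_big_dep predT) //=; apply: eq_bigr => i _.
  by apply: eq_bigr => j _; rewrite T_sym.
by under eq_bigr do rewrite split_row; rewrite big_split /= lower_upper; ring.
Qed.

Lemma double_sum_sqr_dist D (P : 'M[R]_(n, D)) (y : 'I_n -> R) :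
  \sum_i \sum_j (\sum_l (P j l - P i l) ^+ 2) * y i * y j
  = 2 * ((\sum_i (\sum_l P i l ^+ 2) * y i) * \sum_j y j
         - \sum_l (\sum_i P i l * y i) ^+ 2).
Proof.
pose S i := \sum_l P i l ^+ 2.
pose G i j := \sum_l P i l * P j l.
have expand i j : (\sum_l (P j l - P i l) ^+ 2) * y i * y j
    = S i * y i * y j + S j * y j * y i - (G i j * y i * y j) *+ 2.
  suff -> : \sum_l (P j l - P i l) ^+ 2 = S i + S j - 2 * G i j by ring.
  rewrite /S /G mulr_sumr -big_split -sumrB /=.
  by apply: eq_bigr => l _; ring.
have swap : \sum_i \sum_j S j * y j * y i = \sum_i \sum_j S i * y i * y j.
  exact: exchange_big.
have gram : \sum_i \sum_j G i j * y i * y j = \sum_l (\sum_i P i l * y i) ^+ 2.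
  under [RHS]eq_bigr do rewrite expr2 big_distrlr.
  rewrite [RHS]exchange_big; apply: eq_bigr => i _ /=.
  rewrite [RHS]exchange_big; apply: eq_bigr => j _ /=.
  by rewrite /G !mulr_suml; apply: eq_bigr => l _; ring.
under eq_bigr do under eq_bigr do rewrite expand.
under eq_bigr do rewrite sumrB big_split sumrMnl.
rewrite sumrB big_split sumrMnl /= swap gram -big_distrlr /=.
ring.
Qed.

End SymmetricSums.

Section FibreQuadric.
Variables (a D : nat) (k : 'I_a -> 'rV[CC]_D).

Definition prefix_sum (i : 'I_a) : 'rV[CC]_D := \sum_(r < a | (r < i)%N) k r.

Lemma qsq_prefix_sum (i j : 'I_a) : (i <= j)%N ->
  qsq k i j = vsq (prefix_sum j - prefix_sum i).
Proof.
move=> le_ij.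
have -> : prefix_sum j = prefix_sum i + \sum_(r < a | (i <= r < j)%N) k r.
  rewrite /prefix_sum (bigID (fun r : 'I_a => (r < i)%N)) /=; congr (_ + _).
    by apply: eq_bigl => r; rewrite andbC; case: ltnP => //= /leq_trans->.
  by apply: eq_bigl => r; rewrite -leqNgt andbC.
by rewrite addrC addKr.
Qed.

Lemma vsqN (v : 'rV[CC]_D) : vsq (- v) = vsq v.
Proof. by apply: eq_bigr => l _; rewrite mxE sqrrN. Qed.

Lemma sum_qsq_mul (y : 'I_a -> CC) :
  \sum_(i < a) \sum_(j < a | (i < j)%N) qsq k i j * y i * y j
  = (\sum_i vsq (prefix_sum i) * y i) * \sum_i y i
    - \sum_l (\sum_i prefix_sum i 0 l * y i) ^+ 2.
Proof.
pose P := \matrix_(i, l) prefix_sum i 0 l.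
pose T i j := vsq (prefix_sum j - prefix_sum i) * y i * y j.
have T_sym i j : T i j = T j i by rewrite /T -vsqN opprB; ring.
have T_diag0 i : T i i = 0.
  by rewrite /T subrr /vsq big1 ?mul0r // => l _; rewrite mxE expr0n.
have dist i j : (\sum_l (P j l - P i l) ^+ 2) * y i * y j = T i j.
  by rewrite /T /vsq; congr (_ * _ * _); apply: eq_bigr => l _; rewrite !mxE.
have := double_sum_sqr_dist P y.
under eq_bigr do under eq_bigr do rewrite dist.
have two_neq0 : (2 : CC) != 0 by rewrite pnatr_eq0.
rewrite (double_sum_sym_diag0 T_sym T_diag0) => /(mulfI two_neq0).
have -> : \sum_(i < a) \sum_(j < a | (i < j)%N) qsq k i j * y i * y j
    = \sum_(i < a) \sum_(j < a | (i < j)%N) T i j.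
  by apply: eq_bigr => i _; apply: eq_bigr => j lt_ij; rewrite qsq_prefix_sum // ltnW.
move=> ->; congr (_ * _ - _); apply: eq_bigr => i _.
  by congr (_ * _); apply: eq_bigr => l _; rewrite mxE.
by congr (_ ^+ 2); apply: eq_bigr => j _; rewrite mxE.
Qed.

Variables (msq : 'I_a -> CC) (msqx msqz : CC) (p : 'rV[CC]_D) (t : CC).

Definition ycomb (c : 'I_a -> CC) (v : 'rV[CC]_a.+1) : CC :=
  \sum_i c i * v 0 (widen_ord (leqnSn a) i).

Let w (v : 'rV[CC]_a.+1) : CC := v 0 ord_max.

Lemma ycombD c : {morph ycomb c : u v / u + v}.
Proof. by move=> u v; rewrite -big_split; apply: eq_bigr => i _; rewrite mxE mulrDr. Qed.

Let wD : {morph w : u v / u + v}.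
Proof. by move=> u v; rewrite /w mxE. Qed.

Let L v := ycomb msq v + (msqx * t + msqz) * w v.

Lemma fibreQ_decomposition v :
  fibreQ msq msqx msqz p k t 1 v
  = (1 + t) * ycomb (fun=> 1) v * (L v - ycomb (fun i => vsq (prefix_sum i)) v)
    + t * w v * (L v - ycomb (rsq p k) v)
    + \sum_l (1 + t) * ycomb (fun i => prefix_sum i 0 l) v ^+ 2.
Proof.
have -> : ycomb (fun=> 1) v = \sum_i v 0 (widen_ord (leqnSn a) i).
  by apply: eq_bigr => i _; rewrite mul1r.
rewrite /fibreQ sum_qsq_mul -mulr_sumr /L /ycomb /w /=.
ring.
Qed.

Lemma mxrank_fibreGram : (\rank (fibreGram msq msqx msqz p k t 1%R) <= 4 + D)%N.
Proof.
have LD : {morph L : u v / u + v}.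
  by move=> u v; rewrite /L ycombD wD; ring.
have -> : fibreGram msq msqx msqz p k t 1 = polar_mx (fibreQ msq msqx msqz p k t 1) by [].
rewrite (eq_polar_mx fibreQ_decomposition) !polar_mxD polar_mx_sum.
apply: leq_trans (mxrank_add _ _) (leq_add _ _).
  rewrite -[4%N]/(2 + 2)%N.
  apply: leq_trans (mxrank_add _ _) (leq_add _ _); apply: mxrank_polar_mx_mul => //.
  - by move=> u v; rewrite ycombD mulrDr.
  - by move=> u v; rewrite LD ycombD; ring.
  - by move=> u v; rewrite wD mulrDr.
  - by move=> u v; rewrite LD ycombD; ring.
apply: leq_trans (mxrank_sum_leq _ _ _) _.
rewrite -[X in (_ <= X)%N]card_ord -sum1_card; apply: leq_sum => l _.
exact/mxrank_polar_mx_scale_sqr/ycombD.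
Qed.

End FibreQuadric.

Theorem proposition7p3 (a D : nat) (ha : (1 <= a)%N) (hD : (1 <= D)%N)
  (msq : 'I_a -> CC) (msqx msqz : CC)
  (hm : forall i, 0 < msq i) (hmx : 0 < msqx) (hmz : 0 < msqz)
  (p : 'rV[CC]_D) (k : 'I_a -> 'rV[CC]_D)
  (hDa : (D < a - 3)%N) :
  exists S : seq CC, forall t : CC, t \notin S ->
    (1 <= fibre_corank msq msqx msqz p k t (1 : CC)%R)%N.
Proof.
exists [::] => t _; rewrite /fibre_corank subn_gt0 ltnS.
apply: leq_trans (mxrank_fibreGram k msq msqx msqz p t) _.
by move: hDa; clear; lia.
Qed.
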